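(* Let $H$ be a weak Hopf algebra and $A$ a symmetric partial $H$-module algebra. Then $\pi_0\colon H\to A\,\underline{\#}\,H$, $\pi_0(h)=1_A\,\underline{\#}\,h$, is a partial representation of $H$ in the partial smash product $A\,\underline{\#}\,H$.
   Context: All algebras are associative and unital over a field $\Bbbk$; Sweedler notation $\Delta(h)=h_1\otimes h_2$, $\Delta(1_H)=1_1\otimes1_2$. A weak Hopf algebra is $(H,m,u,\Delta,\varepsilon,S)$ with $H$ an algebra, $(H,\Delta,\varepsilon)$ a coalgebra, and for all $g,h,k$: $\Delta(kh)=\Delta(k)\Delta(h)$; $\varepsilon(kh_1)\varepsilon(h_2g)=\varepsilon(khg)=\varepsilon(kh_2)\varepsilon(h_1g)$; $(1\otimes\Delta(1))(\Delta(1)\otimes1)=\Delta^2(1)=(\Delta(1)\otimes1)(1\otimes\Delta(1))$; $h_1S(h_2)=\varepsilon_t(h)$; $S(h_1)h_2=\varepsilon_s(h)$; $S(h)=S(h_1)h_2S(h_3)$, with $\varepsilon_t(h)=\varepsilon(1_1h)1_2$, $\varepsilon_s(h)=1_1\varepsilon(h1_2)$; $H_t=\varepsilon_t(H)$, $H_s=\varepsilon_s(H)$; the restriction $S_R\colon H_s\to H_t$ of $S$ is bijective. Symmetric partial $H$-module algebra: algebra $A$ with linear $h\otimes a\mapsto h\cdot a$ such that $h\cdot(ab)=(h_1\cdot a)(h_2\cdot b)$, $1_H\cdot a=a$, $h\cdot(k\cdot a)=(h_1\cdot1_A)((h_2k)\cdot a)$ and $h\cdot(k\cdot a)=((h_1k)\cdot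 a)(h_2\cdot1_A)$. Smash product $A\#H=A\otimes_{H_t}H$ ($A$ a right $H_t$-module via $a\triangleleft z=a(S_R^{-1}(z)\cdot1_A)$, $H$ a left $H_t$-module by multiplication) with product $(a\#h)(b\#g)=a(h_1\cdot b)\#h_2g$; $A\,\underline{\#}\,H$ is the subalgebra generated by $a\,\underline{\#}\,h:=(a\#h)(1_A\#1_H)=a(h_1\cdot1_A)\#h_2$, unital with unit $1_A\,\underline{\#}\,1_H$. A partial representation of $H$ in an algebra $B$ is a linear $\pi\colon H\to B$ with, for all $h,k$: (PR1) $\pi(1_H)=1_B$; (PR2) $\pi(h)\pi(k_1)\pi(S(k_2))=\pi(hk_1)\pi(S(k_2))$; (PR3) $\pi(h)\pi(S(k_1))\pi(k_2)=\pi(hS(k_1))\pi(k_2)$; (PR4) $\pi(h_1)\pi(S(h_2))\pi(k)=\pi(h_1)\pi(S(h_2)k)$; (PR5) $\pi(S(h_1))\pi(h_2)\pi(k)=\pi(S(h_1))\pi(h_2k)$; (PR6) $\pi(h)=\pi(h_1)\pi(S(h_2))\pi(h_3)$. *)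

(* Weak Hopf algebras, symmetric partial module algebras,
   the partial smash product and partial representations, encoded without a
   tensor-product library: elements of tensor products are represented by
   finite formal sums of pure tensors (sequences of pairs/triples), and
   equality of such elements is tested against all multilinear (resp.
   balanced bilinear) forms with values in the ground field, which separate
   points of (balanced) tensor products of vector spaces over a field. *)
From HB Require Import structures.
From mathcomp Require Import all_boot all_order all_algebra.
Set Implicit Arguments.
Unset Strict Implicit.
Unset Printing Implicit Defensive.
Import GRing.Theory.
Local Open Scope ring_scope.

Section Defs.
Variable K : fieldType.

Definition klinear (V W : lmodType K) (f : V -> W) :=
  forall (a : K) (x y : V), f (a *: x + y) = a *: f x + f y.

Definition kform (V : lmodType K) (f : V -> K) :=
  forall (a : K) (x y : V), f (a *: x + y) = a * f x + f y.

Definition bilinear_form (V W : lmodType K) (f : V -> W -> K) :=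
  (forall w, kform (fun v => f v w)) /\ (forall v, kform (f v)).

Definition trilinear_form (U V W : lmodType K) (f : U -> V -> W -> K) :=
  [/\ forall v w, kform (fun u => f u v w),
      forall u w, kform (fun v => f u v w) &
      forall u v, kform (f u v)].

(* equality of two elements of V (x) W given as formal sums of pure tensors *)
Definition teq2 (V W : lmodType K) (s t : seq (V * W)) :=
  forall f : V -> W -> K, bilinear_form f ->
    \sum_(p <- s) f p.1 p.2 = \sum_(p <- t) f p.1 p.2.

Definition teq3 (U V W : lmodType K) (s t : seq (U * V * W)) :=
  forall f : U -> V -> W -> K, trilinear_form f ->
    \sum_(p <- s) f p.1.1 p.1.2 p.2 = \sum_(p <- t) f p.1.1 p.1.2 p.2.

Section WeakHopf.
Variable H : algType K.
Variables (eps : H -> K) (Delta : H -> seq (H * H)) (S : H -> H).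

Definition eps_t (h : H) : H := \sum_(p <- Delta 1) eps (p.1 * h) *: p.2.
Definition eps_s (h : H) : H := \sum_(p <- Delta 1) eps (h * p.2) *: p.1.

Definition in_Ht (z : H) := exists h, z = eps_t h.
Definition in_Hs (z : H) := exists h, z = eps_s h.

Definition Delta2l (h : H) : seq (H * H * H) :=
  [seq (q.1, q.2, p.2) | p <- Delta h, q <- Delta p.1].
Definition Delta2r (h : H) : seq (H * H * H) :=
  [seq (p.1, q.1, q.2) | p <- Delta h, q <- Delta p.2].

Definition is_weak_hopf : Prop :=
  kform eps
  /\ (forall (a : K) x y, teq2 (Delta (a *: x + y))
          ([seq (a *: p.1, p.2) | p <- Delta x] ++ Delta y))
  /\ (forall h, teq3 (Delta2l h) (Delta2r h))
  /\ (forall h, \sum_(p <- Delta h) eps p.1 *: p.2 = h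
               /\ \sum_(p <- Delta h) eps p.2 *: p.1 = h)
  /\ (forall k h, teq2 (Delta (k * h))
          [seq (p.1 * q.1, p.2 * q.2) | p <- Delta k, q <- Delta h])
  /\ (forall k h g,
          \sum_(p <- Delta h) eps (k * p.1) * eps (p.2 * g) = eps (k * h * g)
       /\ eps (k * h * g) = \sum_(p <- Delta h) eps (k * p.2) * eps (p.1 * g))
  (* weak comultiplicativity of the unit:
     (1 (x) Delta 1)(Delta 1 (x) 1) = Delta^2 1 = (Delta 1 (x) 1)(1 (x) Delta 1) *)
  /\ (teq3 [seq (p.1, q.1 * p.2, q.2) | q <- Delta 1, p <- Delta 1]
            (Delta2l 1)
       /\ teq3 (Delta2l 1)
            [seq (p.1, p.2 * q.1, q.2) | p <- Delta 1, q <- Delta 1])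
  /\ klinear S
  /\ (forall h, \sum_(p <- Delta h) p.1 * S p.2 = eps_t h)
  /\ (forall h, \sum_(p <- Delta h) S p.1 * p.2 = eps_s h)
  /\ (forall h, S h = \sum_(p <- Delta2l h) S p.1.1 * p.1.2 * S p.2)
  (* the restriction S_R : H_s -> H_t of S is a bijection *)
  /\ (forall y, in_Hs y -> in_Ht (S y))
  /\ (forall y y', in_Hs y -> in_Hs y' -> S y = S y' -> y = y')
  /\ (forall z, in_Ht z -> exists2 y, in_Hs y & S y = z).

Variable A : algType K.
Variable act : H -> A -> A.

Definition is_sym_partial_module_algebra : Prop :=
  (forall a, klinear (fun h => act h a))
  /\ (forall h, klinear (act h))
  /\ (forall h (a b : A), act h (a * b) = \sum_(p <- Delta h) act p.1 a * act p.2 b)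
  /\ (forall a, act 1 a = a)
  /\ (forall h k a, act h (act k a) =
          \sum_(p <- Delta h) act p.1 1 * act (p.2 * k) a)
  /\ (forall h k a, act h (act k a) =
          \sum_(p <- Delta h) act (p.1 * k) a * act p.2 1).

Definition smash := seq (A * H).

(* balanced forms: f (a <| z) h = f a (z h) for z in H_t, where
   a <| z = a (S_R^{-1}(z) . 1_A); we write z = S y with y in H_s. *)
Definition balanced (f : A -> H -> K) :=
  forall (y : H) a h, in_Hs y -> f (a * act y 1) h = f a (S y * h).

(* equality in A (x)_{H_t} H *)
Definition smash_eq (x y : smash) :=
  forall f : A -> H -> K, bilinear_form f -> balanced f ->
    \sum_(p <- x) f p.1 p.2 = \sum_(p <- y) f p.1 p.2.

(* (a # h)(b # g) = a (h_1 . b) # h_2 g, extended bilinearly *)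
Definition smash_mul (x y : smash) : smash :=
  flatten [seq [seq (p.1 * act q.1 r.1, q.2 * r.2) | r <- y, q <- Delta p.2] | p <- x].

Definition usmash (a : A) (h : H) : smash := smash_mul [:: (a, h)] [:: (1, 1)].

Definition pi0 (h : H) : smash := usmash 1 h.

(* the unit of the subalgebra A #_ H is 1_A #_ 1_H *)
Definition is_partial_rep_smash (pi : H -> smash) : Prop :=
  smash_eq (pi 1) (usmash 1 1)
  /\ (forall h k, smash_eq
         (flatten [seq smash_mul (smash_mul (pi h) (pi p.1)) (pi (S p.2)) | p <- Delta k])
         (flatten [seq smash_mul (pi (h * p.1)) (pi (S p.2)) | p <- Delta k]))
  /\ (forall h k, smash_eq
         (flatten [seq smash_mul (smash_mul (pi h) (pi (S p.1))) (pi p.2) | p <- Delta k])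
         (flatten [seq smash_mul (pi (h * S p.1)) (pi p.2) | p <- Delta k]))
  /\ (forall h k, smash_eq
         (flatten [seq smash_mul (smash_mul (pi p.1) (pi (S p.2))) (pi k) | p <- Delta h])
         (flatten [seq smash_mul (pi p.1) (pi (S p.2 * k)) | p <- Delta h]))
  /\ (forall h k, smash_eq
         (flatten [seq smash_mul (smash_mul (pi (S p.1)) (pi p.2)) (pi k) | p <- Delta h])
         (flatten [seq smash_mul (pi (S p.1)) (pi (p.2 * k)) | p <- Delta h]))
  /\ (forall h, smash_eq (pi h)
         (flatten [seq smash_mul (smash_mul (pi p.1.1) (pi (S p.1.2))) (pi p.2)
                  | p <- Delta2l h])).

End WeakHopf.
End Defs.

From HB Require Import structures.
From mathcomp Require Import all_boot all_order all_algebra.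
Set Implicit Arguments.
Unset Strict Implicit.
Unset Printing Implicit Defensive.
Import GRing.Theory.
Local Open Scope ring_scope.

(* Equalities in A (x)_{H_t} H are tested against bilinear forms on A x H; all
   the identities below hold for every bilinear form, balanced or not, so the
   axioms of a partial representation hold for pi_0 already in A (x) H.
   From h.(ab) = (h_1.a)(h_2.b) and the partial action axioms one gets
     pi_0(x) pi_0(y)         = x_1.(y_1.1_A) # x_2 y_2,
     pi_0(x) pi_0(y) pi_0(z) = x_1.(y_1.(z_1.1_A)) # x_2 y_2 z_2,
   and each of (PR2)-(PR6) becomes a Sweedler identity in H acting on 1_A.
   These follow from the basic calculus of weak Hopf algebras: S is
   anti-multiplicative and anti-comultiplicative, Delta(eps_t x) = 1_1 eps_t x (x) 1_2,
   h_1 (x) eps_t(h_2) = 1_1 h (x) 1_2 and their eps_s analogues, together with the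
   absorption rules eps_t(x).(k.a) = (eps_t(x) k).a and h.(eps_s(x).1_A) = (h eps_s(x)).1_A. *)

Section LinearForms.
Variable K : fieldType.

Lemma kform0 (V : lmodType K) (g : V -> K) : kform g -> g 0 = 0.
Proof.
move=> hg; have := hg 1 0 0; rewrite scale1r addr0 mul1r => h.
by apply: (@addrI _ (g 0)); rewrite -h !addr0.
Qed.

Lemma kformZ (V : lmodType K) (g : V -> K) a x : kform g -> g (a *: x) = a * g x.
Proof. by move=> hg; have := hg a x 0; rewrite addr0 kform0 // addr0. Qed.

Lemma kformD (V : lmodType K) (g : V -> K) x y : kform g -> g (x + y) = g x + g y.
Proof. by move=> hg; have := hg 1 x y; rewrite scale1r mul1r. Qed.

Lemma kform_sum (V : lmodType K) (g : V -> K) I (s : seq I) (F : I -> V) :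
  kform g -> g (\sum_(i <- s) F i) = \sum_(i <- s) g (F i).
Proof.
move=> hg; elim: s => [|i s IH]; first by rewrite !big_nil kform0.
by rewrite !big_cons kformD // IH.
Qed.

Record lform (V : lmodType K) := LForm { lf :> V -> K; lfP : kform lf }.

Lemma lfD V (L : lform V) a x y : L (a *: x + y) = a * L x + L y.
Proof. exact: lfP. Qed.

Lemma lfZ V (L : lform V) c x : L (c *: x) = c * L x.
Proof. exact/kformZ/lfP. Qed.

Lemma lf_sum V (L : lform V) I (s : seq I) (G : I -> V) :
  L (\sum_(i <- s) G i) = \sum_(i <- s) L (G i).
Proof. exact/kform_sum/lfP. Qed.

Definition weq (V : lmodType K) (x y : V) := forall L : lform V, L x = L y.

Lemma weq_sym (V : lmodType K) (x y : V) : weq x y -> weq y x.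
Proof. by move=> W L; rewrite W. Qed.

Record bform (V W : lmodType K) := BForm { bf :> V -> W -> K; bfP : bilinear_form bf }.

Lemma bfDl V W (f : bform V W) a x y w : f (a *: x + y) w = a * f x w + f y w.
Proof. by case: f => f [hl _] /=; apply: hl. Qed.

Lemma bfDr V W (f : bform V W) a x y w : f w (a *: x + y) = a * f w x + f w y.
Proof. by case: f => f [_ hr] /=; apply: hr. Qed.

Lemma bf_suml V W (f : bform V W) I (s : seq I) (G : I -> V) w :
  f (\sum_(i <- s) G i) w = \sum_(i <- s) f (G i) w.
Proof. by case: f => f [hl _] /=; exact: (kform_sum _ _ (hl w)). Qed.

Definition bil (V W : lmodType K) (F : V * W -> K) := bilinear_form (fun u v => F (u, v)).

Section Bilinear.
Variables (V W : lmodType K) (F : V * W -> K).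
Hypothesis hF : bil F.

Lemma bilDl a x y w : F (a *: x + y, w) = a * F (x, w) + F (y, w).
Proof. by case: hF => hl _; apply: (hl w). Qed.

Lemma bilDr a x y v : F (v, a *: x + y) = a * F (v, x) + F (v, y).
Proof. by case: hF => _ hr; apply: (hr v). Qed.

Lemma bilZl c u v : F (c *: u, v) = c * F (u, v).
Proof. by case: hF => hl _; exact: (kformZ _ _ (hl v)). Qed.

Lemma bilZr c u v : F (v, c *: u) = c * F (v, u).
Proof. by case: hF => _ hr; exact: (kformZ _ _ (hr v)). Qed.

Lemma bil_suml I (s : seq I) (G : I -> V) v :
  F (\sum_(i <- s) G i, v) = \sum_(i <- s) F (G i, v).
Proof. by case: hF => hl _; exact: (kform_sum _ _ (hl v)). Qed.

Lemma bil_sumr I (s : seq I) (G : I -> W) v :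
  F (v, \sum_(i <- s) G i) = \sum_(i <- s) F (v, G i).
Proof. by case: hF => _ hr; exact: (kform_sum _ _ (hr v)). Qed.

End Bilinear.

Lemma trilinearD (U V W : lmodType K) (F : U -> V -> W -> K) : trilinear_form F ->
  [/\ forall a x y v w, F (a *: x + y) v w = a * F x v w + F y v w,
      forall a x y u w, F u (a *: x + y) w = a * F u x w + F u y w &
      forall a x y u v, F u v (a *: x + y) = a * F u v x + F u v y].
Proof.
by case=> h1 h2 h3; split=> a x y u v; [apply: (h1 u v)|apply: (h2 u v)|apply: (h3 u v)].
Qed.

Lemma mulr_linl (R : algType K) a (x y z : R) : (a *: x + y) * z = a *: (x * z) + y * z.
Proof. by rewrite mulrDl scalerAl. Qed.

Lemma mulr_linr (R : algType K) a (x y z : R) : z * (a *: x + y) = a *: (z * x) + z * y.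
Proof. by rewrite mulrDr scalerAr. Qed.

Lemma scaler_lin (R : lmodType K) a c (x y : R) : c *: (a *: x + y) = a *: (c *: x) + c *: y.
Proof. by rewrite scalerDr !scalerA mulrC. Qed.

Lemma mulK_linr (c a X Y : K) : c * (a * X + Y) = a * (c * X) + c * Y.
Proof. by rewrite mulrDr mulrCA. Qed.

Lemma mulK_linl (c a X Y : K) : (a * X + Y) * c = a * (X * c) + Y * c.
Proof. by rewrite mulrDl mulrA. Qed.

End LinearForms.

Section WeakHopf.
Variables (K : fieldType) (H : algType K).
Variables (eps : H -> K) (Delta : H -> seq (H * H)) (S : H -> H).
Hypothesis HW : is_weak_hopf eps Delta S.

Local Notation epst := (eps_t eps Delta).
Local Notation epss := (eps_s eps Delta).

Lemma epsD a x y : eps (a *: x + y) = a * eps x + eps y.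
Proof. by case: HW => ax _; apply: ax. Qed.

Lemma Delta_lin a x y :
  teq2 (Delta (a *: x + y)) ([seq (a *: p.1, p.2) | p <- Delta x] ++ Delta y).
Proof. by case: HW => _ [ax _]. Qed.

Lemma coassoc h : teq3 (Delta2l Delta h) (Delta2r Delta h).
Proof. by case: HW => _ [_ [ax _]]. Qed.

Lemma counit h : \sum_(p <- Delta h) eps p.1 *: p.2 = h /\ \sum_(p <- Delta h) eps p.2 *: p.1 = h.
Proof. by case: HW => _ [_ [_ [ax _]]]. Qed.

Lemma DeltaM k h : teq2 (Delta (k * h)) [seq (p.1 * q.1, p.2 * q.2) | p <- Delta k, q <- Delta h].
Proof. by case: HW => _ [_ [_ [_ [ax _]]]]. Qed.

Lemma eps_weakM k h g :
     \sum_(p <- Delta h) eps (k * p.1) * eps (p.2 * g) = eps (k * h * g)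
  /\ eps (k * h * g) = \sum_(p <- Delta h) eps (k * p.2) * eps (p.1 * g).
Proof. by case: HW => _ [_ [_ [_ [_ [ax _]]]]]. Qed.

Lemma Delta1_weak_unitl :
  teq3 [seq (p.1, q.1 * p.2, q.2) | q <- Delta 1, p <- Delta 1] (Delta2l Delta 1).
Proof. by case: HW => _ [_ [_ [_ [_ [_ [[ax _] _]]]]]]. Qed.

Lemma Delta1_weak_unitr :
  teq3 (Delta2l Delta 1) [seq (p.1, p.2 * q.1, q.2) | p <- Delta 1, q <- Delta 1].
Proof. by case: HW => _ [_ [_ [_ [_ [_ [[_ ax] _]]]]]]. Qed.

Lemma SD a x y : S (a *: x + y) = a *: S x + S y.
Proof. by case: HW => _ [_ [_ [_ [_ [_ [_ [ax _]]]]]]]; apply: ax. Qed.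

Lemma antipode_t h : \sum_(p <- Delta h) p.1 * S p.2 = epst h.
Proof. by case: HW => _ [_ [_ [_ [_ [_ [_ [_ [ax _]]]]]]]]. Qed.

Lemma antipode_s h : \sum_(p <- Delta h) S p.1 * p.2 = epss h.
Proof. by case: HW => _ [_ [_ [_ [_ [_ [_ [_ [_ [ax _]]]]]]]]]. Qed.

Lemma antipode_triple h : S h = \sum_(p <- Delta2l Delta h) S p.1.1 * p.1.2 * S p.2.
Proof. by case: HW => _ [_ [_ [_ [_ [_ [_ [_ [_ [_ [ax _]]]]]]]]]]. Qed.

Lemma epstE x : epst x = \sum_(p <- Delta 1) eps (p.1 * x) *: p.2.
Proof. by []. Qed.

Lemma epssE x : epss x = \sum_(p <- Delta 1) eps (x * p.2) *: p.1.
Proof. by []. Qed.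

Lemma epstD a x y : epst (a *: x + y) = a *: epst x + epst y.
Proof.
rewrite !epstE scaler_sumr -big_split /=; apply: eq_bigr => p _.
by rewrite mulr_linr epsD scalerDl scalerA.
Qed.

Lemma epssD a x y : epss (a *: x + y) = a *: epss x + epss y.
Proof.
rewrite !epssE scaler_sumr -big_split /=; apply: eq_bigr => p _.
by rewrite mulr_linl epsD scalerDl scalerA.
Qed.

Lemma sum_Delta_lin (F : H * H -> K) a x y : bil F ->
  \sum_(p <- Delta (a *: x + y)) F p = a * \sum_(p <- Delta x) F p + \sum_(p <- Delta y) F p.
Proof.
move=> hF; have := @Delta_lin a x y (fun u v => F (u, v)) hF.
have E (s : seq (H * H)) : \sum_(p <- s) F (p.1, p.2) = \sum_(p <- s) F p.
  by apply: eq_bigr => -[].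
rewrite !E => ->; rewrite big_cat big_map /= big_distrr /=; congr (_ + _).
by apply: eq_bigr => -[u v] _ /=; rewrite bilZl.
Qed.

Lemma sum_Delta_kform (F : H * H -> K) : bil F -> kform (fun x => \sum_(p <- Delta x) F p).
Proof. by move=> hF a x y; rewrite sum_Delta_lin. Qed.

Lemma sum_Delta_sumZ (F : H * H -> K) I (s : seq I) (c : I -> K) (v : I -> H) : bil F ->
  \sum_(q <- Delta (\sum_(i <- s) c i *: v i)) F q =
  \sum_(i <- s) c i * \sum_(q <- Delta (v i)) F q.
Proof.
move=> hF; rewrite (kform_sum _ _ (sum_Delta_kform hF)).
by apply: eq_bigr => i _; rewrite (kformZ _ _ (sum_Delta_kform hF)).
Qed.

Lemma sum_DeltaM (F : H * H -> K) x y : bil F ->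
  \sum_(p <- Delta (x * y)) F p = \sum_(p <- Delta x) \sum_(q <- Delta y) F (p.1 * q.1, p.2 * q.2).
Proof.
move=> hF; have := @DeltaM x y (fun u v => F (u, v)) hF.
have E (s : seq (H * H)) : \sum_(p <- s) F (p.1, p.2) = \sum_(p <- s) F p.
  by apply: eq_bigr => -[].
by rewrite E => ->; rewrite big_allpairs_dep.
Qed.

Lemma sum_Delta1M (F : H * H -> K) h : bil F ->
  \sum_(p <- Delta 1) \sum_(q <- Delta h) F (p.1 * q.1, p.2 * q.2) = \sum_(q <- Delta h) F q.
Proof. by move=> hF; rewrite -sum_DeltaM // mul1r. Qed.

Lemma sum_DeltaM1 (F : H * H -> K) h : bil F ->
  \sum_(q <- Delta h) \sum_(p <- Delta 1) F (q.1 * p.1, q.2 * p.2) = \sum_(q <- Delta h) F q.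
Proof. by move=> hF; rewrite -sum_DeltaM // mulr1. Qed.

(* In the coassociativity and unit lemmas the summand [F t q] may not depend on
   one component of the pair [t]: keeping the pair lets [rewrite] find [F] by
   first-order matching on the goal. *)
Lemma coassoc_rl (F : H * H -> H * H -> K) h :
  (forall u z z' r, F (u, z) r = F (u, z') r) ->
  trilinear_form (fun a b c => F (a, 0) (b, c)) ->
  \sum_(t <- Delta h) \sum_(q <- Delta t.2) F t q =
  \sum_(t <- Delta h) \sum_(q <- Delta t.1) F (q.1, 0) (q.2, t.2).
Proof.
move=> hz hF; have := @coassoc h (fun a b c => F (a, 0) (b, c)) hF.
rewrite /Delta2l /Delta2r !big_allpairs_dep /= => ->.
by apply: eq_bigr => -[u v] _; apply: eq_bigr => -[q1 q2] _ /=; rewrite (hz u v 0).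
Qed.

Lemma coassoc_lr (G : H * H -> H * H -> K) h :
  (forall z z' v r, G (z, v) r = G (z', v) r) ->
  trilinear_form (fun a b c => G (0, c) (a, b)) ->
  \sum_(t <- Delta h) \sum_(q <- Delta t.1) G t q =
  \sum_(t <- Delta h) \sum_(q <- Delta t.2) G (0, q.2) (t.1, q.1).
Proof.
move=> hz hF; have := @coassoc h (fun a b c => G (0, c) (a, b)) hF.
rewrite /Delta2l /Delta2r !big_allpairs_dep /= => <-.
by apply: eq_bigr => -[u v] _; apply: eq_bigr => -[q1 q2] _ /=; rewrite (hz u 0 v).
Qed.

Lemma sum_Delta1_unitl (F : H * H -> H * H -> K) :
  (forall z z' v r, F (z, v) r = F (z', v) r) ->
  trilinear_form (fun a b c => F (0, c) (a, b)) ->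
  \sum_(t <- Delta 1) \sum_(r <- Delta t.1) F t r =
  \sum_(q <- Delta 1) \sum_(p <- Delta 1) F (0, q.2) (p.1, q.1 * p.2).
Proof.
move=> hz hF; have := @Delta1_weak_unitl (fun a b c => F (0, c) (a, b)) hF.
rewrite /Delta2l !big_allpairs_dep /= => E.
rewrite (_ : \sum_(t <- Delta 1) _
  = \sum_(t <- Delta 1) \sum_(r <- Delta t.1) F (0, t.2) (r.1, r.2)).
  by rewrite -E.
by apply: eq_bigr => -[u v] _; apply: eq_bigr => -[q1 q2] _ /=; rewrite (hz u 0 v).
Qed.

Lemma sum_Delta1_unitr (F : H * H -> H * H -> K) :
  (forall z z' v r, F (z, v) r = F (z', v) r) ->
  trilinear_form (fun a b c => F (0, c) (a, b)) ->
  \sum_(t <- Delta 1) \sum_(r <- Delta t.1) F t r =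
  \sum_(p <- Delta 1) \sum_(q <- Delta 1) F (0, q.2) (p.1, p.2 * q.1).
Proof.
move=> hz hF; have := @Delta1_weak_unitr (fun a b c => F (0, c) (a, b)) hF.
rewrite /Delta2l !big_allpairs_dep /= => E.
rewrite (_ : \sum_(t <- Delta 1) _
  = \sum_(t <- Delta 1) \sum_(r <- Delta t.1) F (0, t.2) (r.1, r.2)).
  by rewrite E.
by apply: eq_bigr => -[u v] _; apply: eq_bigr => -[q1 q2] _ /=; rewrite (hz u 0 v).
Qed.

Lemma sum_counitl (g : H -> K) h : kform g -> \sum_(p <- Delta h) eps p.1 * g p.2 = g h.
Proof.
move=> hg; rewrite -{2}(counit h).1 kform_sum //.
by apply: eq_bigr => p _; rewrite kformZ.
Qed.

Lemma sum_counitr (g : H -> K) h : kform g -> \sum_(p <- Delta h) eps p.2 * g p.1 = g h.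
Proof.
move=> hg; rewrite -{2}(counit h).2 kform_sum //.
by apply: eq_bigr => p _; rewrite kformZ.
Qed.

Lemma sum_Delta_epstE (F : H * H -> K) x : bil F ->
  \sum_(b <- Delta x) \sum_(e <- Delta (b.1 * S b.2)) F e = \sum_(e <- Delta (epst x)) F e.
Proof. by move=> hF; rewrite -antipode_t (kform_sum _ _ (sum_Delta_kform hF)). Qed.

Lemma sum_Delta_epssE (F : H * H -> K) x : bil F ->
  \sum_(b <- Delta x) \sum_(e <- Delta (S b.1 * b.2)) F e = \sum_(e <- Delta (epss x)) F e.
Proof. by move=> hF; rewrite -antipode_s (kform_sum _ _ (sum_Delta_kform hF)). Qed.

(* [kf], [bilin] and [trilin] prove that a summand is linear in each argument by
   pushing linear combinations outwards, through [Delta] and through sums; the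
   linearity of abstract forms is taken from context facts such as [bilDl hF], and
   [linearity_hook] is later extended by the linearity of the partial action. *)
Ltac linearity_hook := fail.
Ltac rewrite_linear_hyps := match goal with
  | D : forall (a : _) (x y w : _), _ (a *: x + y, w) = _ |- _ => progress rewrite ?D
  | D : forall (a : _) (x y w : _), _ (w, a *: x + y) = _ |- _ => progress rewrite ?D
  | D : forall (a : _) (x y u v : _), _ (a *: x + y) u v = _ |- _ => progress rewrite ?D
  | D : forall (a : _) (x y : _), _ (a *: x + y) = _ |- _ => progress rewrite ?D
  | D : forall (a : _) (x y u v : _), _ u (a *: x + y) v = _ |- _ => progress rewrite ?D
  | D : forall (a : _) (x y u v : _), _ u v (a *: x + y) = _ |- _ => progress rewrite ?D
  end.
Ltac push_linear := repeat progress (rewrite ?SD ?epsD ?epssD ?epstD ?mulr_linl ?mulr_linr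
  ?scaler_lin ?bfDl ?bfDr ?lfD ?mulK_linr ?mulK_linl; try rewrite_linear_hyps; try linearity_hook).
Ltac lin_eq := push_linear; first [ reflexivity
   | (rewrite sum_Delta_lin; [lin_eq | bilin])
   | (rewrite big_distrr -big_split /=; apply: eq_bigr => ? _; lin_eq) ]
with bilin := rewrite ?/bil ?/bilinear_form; split => ?; kf
with trilin := rewrite ?/trilinear_form; split => ? ?; kf
with kf := let a := fresh "a" in let x := fresh "x" in let y := fresh "y" in
  move=> a x y /=; lin_eq.

Ltac coass_rl := rewrite coassoc_rl //=; [|trilin].
Ltac coass_lr := rewrite coassoc_lr //=; [|trilin].
Ltac unit_l := rewrite sum_Delta1_unitl //=; [|trilin].
Ltac unit_r := rewrite sum_Delta1_unitr //=; [|trilin].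
Ltac split_DeltaM := rewrite sum_DeltaM /=; [|bilin].

(* In lemmas of this shape the summand [G] is matched against the goal, while a
   tactic supplies the linear form [g] (or [F]) explicitly. *)
Lemma sum_antipode_t (g : H -> K) (G : H * H -> K) h :
  kform g -> (forall p, G p = g (p.1 * S p.2)) -> \sum_(p <- Delta h) G p = g (epst h).
Proof. by move=> hg hG; rewrite -antipode_t kform_sum //; apply: eq_bigr. Qed.

Lemma sum_antipode_s (g : H -> K) (G : H * H -> K) h :
  kform g -> (forall p, G p = g (S p.1 * p.2)) -> \sum_(p <- Delta h) G p = g (epss h).
Proof. by move=> hg hG; rewrite -antipode_s kform_sum //; apply: eq_bigr. Qed.

Lemma sum_DeltaM_eq (F : H * H -> K) (G : H * H -> H * H -> K) x y : bil F ->
  (forall p q, G p q = F (p.1 * q.1, p.2 * q.2)) ->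
  \sum_(p <- Delta x) \sum_(q <- Delta y) G p q = \sum_(p <- Delta (x * y)) F p.
Proof. by move=> hF hG; rewrite sum_DeltaM //; do 2!apply: eq_bigr => ? _. Qed.

Lemma sum_Delta1M_eq (F : H * H -> K) (G : H * H -> H * H -> K) h : bil F ->
  (forall p q, G p q = F (p.1 * q.1, p.2 * q.2)) ->
  \sum_(p <- Delta 1) \sum_(q <- Delta h) G p q = \sum_(q <- Delta h) F q.
Proof. by move=> hF hG; rewrite -sum_Delta1M //; do 2!apply: eq_bigr => ? _. Qed.

Lemma sum_DeltaM1_eq (F : H * H -> K) (G : H * H -> H * H -> K) h : bil F ->
  (forall p q, G q p = F (q.1 * p.1, q.2 * p.2)) ->
  \sum_(q <- Delta h) \sum_(p <- Delta 1) G q p = \sum_(q <- Delta h) F q.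
Proof. by move=> hF hG; rewrite -sum_DeltaM1 //; do 2!apply: eq_bigr => ? _. Qed.

Ltac drop_Delta1M F := rewrite (sum_Delta1M_eq (F := F)) /=; [|bilin|by []].

Ltac drop_DeltaM1 F := rewrite (sum_DeltaM1_eq (F := F)) /=; [|bilin|by []].

Lemma sum_Delta_epstl (F : H * H -> K) x : bil F ->
  \sum_(p <- Delta (epst x)) F p = \sum_(q <- Delta 1) F (q.1 * epst x, q.2).
Proof.
move=> hF; have D1 := bilDl hF; have D2 := bilDr hF.
rewrite epstE sum_Delta_sumZ //.
under eq_bigr => p _ do rewrite big_distrr /=.
coass_rl. unit_l.
apply: eq_bigr => q _; rewrite big_distrr /= bil_suml //; apply: eq_bigr => p _.
by rewrite -scalerAr bilZl.
Qed.

Lemma sum_Delta_epstr (F : H * H -> K) x : bil F ->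
  \sum_(p <- Delta (epst x)) F p = \sum_(q <- Delta 1) F (epst x * q.1, q.2).
Proof.
move=> hF; have D1 := bilDl hF; have D2 := bilDr hF.
rewrite epstE sum_Delta_sumZ //.
under eq_bigr => p _ do rewrite big_distrr /=.
coass_rl. unit_r. rewrite exchange_big /=.
apply: eq_bigr => q _; rewrite big_distrl /= bil_suml //; apply: eq_bigr => p _.
by rewrite -scalerAl bilZl.
Qed.

Lemma sum_Delta_epssl (F : H * H -> K) x : bil F ->
  \sum_(p <- Delta (epss x)) F p = \sum_(q <- Delta 1) F (q.1, epss x * q.2).
Proof.
move=> hF; have D1 := bilDl hF; have D2 := bilDr hF.
rewrite epssE sum_Delta_sumZ //.
under eq_bigr => p _ do rewrite big_distrr /=.
unit_l. rewrite exchange_big /=.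
apply: eq_bigr => q _; rewrite big_distrl /= bil_sumr //; apply: eq_bigr => p _.
by rewrite -scalerAl bilZr.
Qed.

Lemma sum_Delta_epssr (F : H * H -> K) x : bil F ->
  \sum_(p <- Delta (epss x)) F p = \sum_(q <- Delta 1) F (q.1, q.2 * epss x).
Proof.
move=> hF; have D1 := bilDl hF; have D2 := bilDr hF.
rewrite epssE sum_Delta_sumZ //.
under eq_bigr => p _ do rewrite big_distrr /=.
unit_r.
apply: eq_bigr => q _; rewrite big_distrr /= bil_sumr //; apply: eq_bigr => p _.
by rewrite -scalerAr bilZr.
Qed.

Lemma sum_DeltaM_epst (F : H * H -> K) h x : bil F ->
  \sum_(p <- Delta (h * epst x)) F p = \sum_(p <- Delta h) F (p.1 * epst x, p.2).
Proof.
move=> hF; have D1 := bilDl hF; have D2 := bilDr hF.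
split_DeltaM. under eq_bigr => p _ do (rewrite sum_Delta_epstl /=; [|bilin]).
rewrite -(sum_DeltaM1 (F := fun u => F (u.1 * epst x, u.2))) /=; last by bilin.
by apply: eq_bigr => p _; apply: eq_bigr => q _; rewrite mulrA.
Qed.

Lemma sum_DeltaM_epss (F : H * H -> K) h x : bil F ->
  \sum_(p <- Delta (h * epss x)) F p = \sum_(p <- Delta h) F (p.1, p.2 * epss x).
Proof.
move=> hF; have D1 := bilDl hF; have D2 := bilDr hF.
split_DeltaM. under eq_bigr => p _ do (rewrite sum_Delta_epssr /=; [|bilin]).
rewrite -(sum_DeltaM1 (F := fun u => F (u.1, u.2 * epss x))) /=; last by bilin.
by apply: eq_bigr => p _; apply: eq_bigr => q _; rewrite mulrA.
Qed.

Lemma sum_Delta_epssM (F : H * H -> K) h x : bil F ->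
  \sum_(p <- Delta (epss x * h)) F p = \sum_(p <- Delta h) F (p.1, epss x * p.2).
Proof.
move=> hF; have D1 := bilDl hF; have D2 := bilDr hF.
split_DeltaM. rewrite sum_Delta_epssl /=; last by bilin.
rewrite -(sum_Delta1M (F := fun u => F (u.1, epss x * u.2))) /=; last by bilin.
by apply: eq_bigr => p _; apply: eq_bigr => q _; rewrite mulrA.
Qed.

Lemma sum_Delta_epst2 (F : H * H -> K) h : bil F ->
  \sum_(p <- Delta h) F (p.1, epst p.2) = \sum_(q <- Delta 1) F (q.1 * h, q.2).
Proof.
move=> hF; have D1 := bilDl hF; have D2 := bilDr hF.
symmetry.
under eq_bigr => q _ do (rewrite -(sum_counitr (g := fun v => F (v, q.2)))
  /=; [|by move=> *; rewrite D1]).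
under eq_bigr => q _ do (rewrite sum_DeltaM /=; [|bilin]).
unit_l.
under eq_bigr => q _ do under eq_bigr => p _ do under eq_bigr => t _ do rewrite -mulrA.
under eq_bigr => q _ do drop_Delta1M (fun u : H * H => eps (q.1 * u.2) * F (u.1, q.2)).
rewrite exchange_big /=; apply: eq_bigr => t _.
by rewrite epstE bil_sumr //; apply: eq_bigr => q _; rewrite bilZr.
Qed.

Lemma sum_Delta_epss1 (F : H * H -> K) h : bil F ->
  \sum_(p <- Delta h) F (epss p.1, p.2) = \sum_(q <- Delta 1) F (q.1, h * q.2).
Proof.
move=> hF; have D1 := bilDl hF; have D2 := bilDr hF.
symmetry.
under eq_bigr => q _ do (rewrite -(sum_counitl (g := fun v => F (q.1, v)))
  /=; [|by move=> *; rewrite D2]).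
under eq_bigr => q _ do (rewrite sum_DeltaM /=; [|bilin]).
under eq_bigr => q _ do rewrite exchange_big /=.
coass_rl.
unit_l.
rewrite exchange_big /=.
under eq_bigr => p _ do rewrite exchange_big /=.
under eq_bigr => p _ do under eq_bigr => i _ do under eq_bigr => q _ do rewrite mulrA.
under eq_bigr => p _ do drop_DeltaM1 (fun u : H * H => eps (u.1 * p.2) * F (p.1, u.2)).
rewrite exchange_big /=; apply: eq_bigr => t _.
by rewrite epssE bil_suml //; apply: eq_bigr => q _; rewrite bilZl.
Qed.

Lemma eps_epssM h w : eps (epss h * w) = eps (h * w).
Proof.
rewrite epssE big_distrl /= (kform_sum _ _ (fun a x y => epsD a x y)).
have := (eps_weakM h 1 w).2; rewrite mulr1 => ->; apply: eq_bigr => p _.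
by rewrite -scalerAl (kformZ _ _ (fun a x y => epsD a x y)) mulrC.
Qed.

Lemma eps_Mepst h w : eps (w * epst h) = eps (w * h).
Proof.
rewrite epstE big_distrr /= (kform_sum _ _ (fun a x y => epsD a x y)).
have := (eps_weakM w 1 h).2; rewrite mulr1 => ->; apply: eq_bigr => p _.
by rewrite -scalerAr (kformZ _ _ (fun a x y => epsD a x y)) mulrC.
Qed.

Lemma epssM_epss h g : epss (h * g) = epss (epss h * g).
Proof. by rewrite !epssE; apply: eq_bigr => p _; rewrite -!mulrA eps_epssM. Qed.

Lemma epstM_epst h g : epst (h * g) = epst (h * epst g).
Proof. by rewrite !epstE; apply: eq_bigr => p _; rewrite !mulrA eps_Mepst. Qed.

Ltac fold_antipode_t g := rewrite (sum_antipode_t (g := g)) /=; [|kf|by []].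
Ltac fold_antipode_s g := rewrite (sum_antipode_s (g := g)) /=; [|kf|by []].
Ltac fold_DeltaM F := rewrite (sum_DeltaM_eq (F := F)) /=; [|bilin|by []].


Lemma antipode_Sepst h : weq (S h) (\sum_(p <- Delta h) S p.1 * epst p.2).
Proof.
move=> L; rewrite antipode_triple !lf_sum /Delta2l big_allpairs_dep /=.
coass_lr.
apply: eq_bigr => t _; rewrite -antipode_t big_distrr /= lf_sum; apply: eq_bigr => q _.
by rewrite mulrA.
Qed.

Lemma antipode_epssS h : weq (S h) (\sum_(p <- Delta h) epss p.1 * S p.2).
Proof.
move=> L; rewrite antipode_triple !lf_sum /Delta2l big_allpairs_dep /=.
by apply: eq_bigr => t _; rewrite -antipode_s big_distrl /= lf_sum.
Qed.

Lemma antipode_Sepst_eq (g : H -> K) (G : H * H -> K) h :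
  kform g -> (forall p, G p = g (S p.1 * epst p.2)) -> \sum_(p <- Delta h) G p = g (S h).
Proof.
move=> hg hG; rewrite -[RHS]/(LForm hg (S h)) (antipode_Sepst h) lf_sum.
exact: eq_bigr.
Qed.

Lemma antipode_epssS_eq (g : H -> K) (G : H * H -> K) h :
  kform g -> (forall p, G p = g (epss p.1 * S p.2)) -> \sum_(p <- Delta h) G p = g (S h).
Proof.
move=> hg hG; rewrite -[RHS]/(LForm hg (S h)) (antipode_epssS h) lf_sum.
exact: eq_bigr.
Qed.

Ltac fold_antipode_Sepst g := rewrite (antipode_Sepst_eq (g := g)) /=; [|kf|by []].
Ltac fold_antipode_epssS g := rewrite (antipode_epssS_eq (g := g)) /=; [|kf|by []].

Ltac get_lhs := lazymatch goal with |- Under_rel _ _ ?L _ => L | |- ?L = _ => L end.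

(* Rewrites with [W : weq t t'] in the left-hand side [L] of the goal: [L] is
   abstracted as [F t], and [F] is shown to be linear. *)
Ltac rewrite_weq W := let L := get_lhs in
  lazymatch type of W with weq ?t ?t' =>
   let C := eval pattern t in L in
   lazymatch C with ?F _ =>
     let hk := fresh "hk" in
     have hk : kform F; [kf|];
     rewrite (_ : L = F t'); [cbv beta; clear hk | exact: (W (LForm hk))]
   end end.

Lemma epssM_weq h g : weq (epss (h * g)) (\sum_(p <- Delta g) S p.1 * (epss h * p.2)).
Proof.
move=> L; rewrite epssM_epss -antipode_s lf_sum lf_sum.
by rewrite (sum_Delta_epssM (F := fun u => L (S u.1 * u.2))) //; bilin.
Qed.

Lemma epstM_weq h g : weq (epst (h * g)) (\sum_(p <- Delta h) p.1 * epst g * S p.2).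
Proof.
move=> L; rewrite epstM_epst -antipode_t lf_sum lf_sum.
by rewrite (sum_DeltaM_epst (F := fun u => L (u.1 * S u.2))) //; bilin.
Qed.

Lemma epss_epst_commute x w : weq (epss x * epst w) (epst w * epss x).
Proof.
move=> L.
have E : \sum_(q <- Delta 1) \sum_(p <- Delta 1) eps (x * q.2) * eps (p.1 * w) * L (q.1 * p.2) =
         \sum_(p <- Delta 1) \sum_(q <- Delta 1) eps (x * q.2) * eps (p.1 * w) * L (p.2 * q.1).
  rewrite -(sum_Delta1_unitl (F := fun t r => eps (x * t.2) * eps (r.1 * w) * L r.2))
    //=; last by trilin.
  by rewrite (sum_Delta1_unitr (F := fun t r => eps (x * t.2) * eps (r.1 * w) * L r.2)) //=; trilin.
transitivity
  (\sum_(q <- Delta 1) \sum_(p <- Delta 1) eps (x * q.2) * eps (p.1 * w) * L (q.1 * p.2)).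
  rewrite epssE epstE big_distrl /= lf_sum; apply: eq_bigr => q _.
  rewrite big_distrr /= lf_sum; apply: eq_bigr => p _.
  by rewrite -scalerAl -scalerAr !lfZ mulrA.
rewrite E epssE epstE big_distrl /= lf_sum; apply: eq_bigr => p _.
rewrite big_distrr /= lf_sum; apply: eq_bigr => q _.
by rewrite -scalerAl -scalerAr !lfZ mulrCA mulrA.
Qed.

Lemma antipodeM h g : weq (S (h * g)) (S g * S h).
Proof.
move=> L.
rewrite (antipode_epssS _ L) lf_sum; split_DeltaM.
under eq_bigr => a _ do under eq_bigr => b _ do rewrite_weq (epssM_weq a.1 b.1).
under eq_bigr => a _ do under eq_bigr => b _ do rewrite big_distrl /= lf_sum.
under eq_bigr => a _ do coass_lr.
under eq_bigr => a _ do under eq_bigr => b _ do under eq_bigr => c _ do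
  rewrite -antipode_s big_distrl /= big_distrr /= big_distrl /= lf_sum.
under eq_bigr => a _ do under eq_bigr => b _ do rewrite exchange_big /=.
under eq_bigr => a _ do rewrite exchange_big /=.
coass_lr.
under eq_bigr => a _ do rewrite exchange_big /=.
under eq_bigr => a _ do under eq_bigr => b _ do under eq_bigr => i _ do under eq_bigr => c _ do
  rewrite -[S a.1 * i.1 * c.1]mulrA.
under eq_bigr => a _ do under eq_bigr => b _ do
  fold_DeltaM (fun u : H * H => L (S b.1 * (S a.1 * u.1) * S u.2)).
under eq_bigr => a _ do under eq_bigr => b _ do under eq_bigr => e _ do
  rewrite -mulrA -[S a.1 * e.1 * _]mulrA.
under eq_bigr => a _ do under eq_bigr => b _ do fold_antipode_t (fun v => L (S b.1 * (S a.1 * v))).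
under eq_bigr => a _ do under eq_bigr => b _ do rewrite_weq (epstM_weq a.2 b.2).
under eq_bigr => a _ do under eq_bigr => b _ do rewrite !big_distrr /= lf_sum.
under eq_bigr => a _ do rewrite exchange_big /=.
coass_rl.
under eq_bigr => a _ do rewrite exchange_big /=.
under eq_bigr => a _ do under eq_bigr => b _ do under eq_bigr => q _ do
  rewrite -[q.2 * _ * S a.2]mulrA [S q.1 * (q.2 * _)]mulrA.
under eq_bigr => a _ do under eq_bigr => b _ do
  fold_antipode_s (fun v => L (S b.1 * (v * (epst b.2 * S a.2)))).
under eq_bigr => a _ do under eq_bigr => b _ do rewrite [epss a.1 * (_ * _)]mulrA.
under eq_bigr => a _ do under eq_bigr => b _ do rewrite_weq (epss_epst_commute a.1 b.2).
under eq_bigr => a _ do under eq_bigr => b _ do rewrite -[epst b.2 * epss a.1 * S a.2]mulrA mulrA.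
under eq_bigr => a _ do fold_antipode_Sepst (fun v => L (v * (epss a.1 * S a.2))).
by fold_antipode_epssS (fun v => L (S g * v)).
Qed.

Lemma sum_Delta_epst2_eq (F : H * H -> K) (G : H * H -> K) h :
  bil F -> (forall p, G p = F (p.1, epst p.2)) ->
  \sum_(p <- Delta h) G p = \sum_(q <- Delta 1) F (q.1 * h, q.2).
Proof. by move=> hF hG; rewrite -sum_Delta_epst2 //; apply: eq_bigr. Qed.

Lemma sum_Delta_epst2_eqV (F : H * H -> K) (G : H * H -> K) h :
  bil F -> (forall q, G q = F (q.1 * h, q.2)) ->
  \sum_(q <- Delta 1) G q = \sum_(p <- Delta h) F (p.1, epst p.2).
Proof. by move=> hF hG; rewrite sum_Delta_epst2 //; apply: eq_bigr. Qed.

Lemma sum_Delta_epss1_eq (F : H * H -> K) (G : H * H -> K) h :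
  bil F -> (forall p, G p = F (epss p.1, p.2)) ->
  \sum_(p <- Delta h) G p = \sum_(q <- Delta 1) F (q.1, h * q.2).
Proof. by move=> hF hG; rewrite -sum_Delta_epss1 //; apply: eq_bigr. Qed.

Lemma sum_Delta_epss1_eqV (F : H * H -> K) (G : H * H -> K) h :
  bil F -> (forall q, G q = F (q.1, h * q.2)) ->
  \sum_(q <- Delta 1) G q = \sum_(p <- Delta h) F (epss p.1, p.2).
Proof. by move=> hF hG; rewrite sum_Delta_epss1 //; apply: eq_bigr. Qed.

Ltac epst2_to_Delta1 F := rewrite (sum_Delta_epst2_eq (F := F)) /=; [|bilin|by []].

Ltac Delta1_to_epst2 F h := rewrite (sum_Delta_epst2_eqV (F := F) (h := h))
  /=; [|bilin|by move=> ?; rewrite ?mulr1 ?mul1r].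

Ltac epss1_to_Delta1 F := rewrite (sum_Delta_epss1_eq (F := F)) /=; [|bilin|by []].

Ltac Delta1_to_epss1 F h := rewrite (sum_Delta_epss1_eqV (F := F) (h := h))
  /=; [|bilin|by move=> ?; rewrite ?mulr1 ?mul1r].

Lemma antipode_epss x : weq (S (epss x)) (epst (epss x)).
Proof.
move=> L; rewrite (antipode_epssS _ L) lf_sum (sum_Delta_epssl
  (F := fun u => L (epss u.1 * S u.2))) /=; last by bilin.
epss1_to_Delta1 (fun u : H * H => L (u.1 * S (epss x * u.2))).
rewrite -antipode_t lf_sum (sum_Delta_epssl (F := fun u => L (u.1 * S u.2))) /=; last by bilin.
by apply: eq_bigr => q _; rewrite mul1r.
Qed.

Lemma antipode_epst x : weq (S (epst x)) (epss (epst x)).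
Proof.
move=> L; rewrite (antipode_Sepst _ L) lf_sum (sum_Delta_epstl
  (F := fun u => L (S u.1 * epst u.2))) /=; last by bilin.
epst2_to_Delta1 (fun u : H * H => L (S (u.1 * epst x) * u.2)).
rewrite -antipode_s lf_sum (sum_Delta_epstl (F := fun u => L (S u.1 * u.2))) /=; last by bilin.
by apply: eq_bigr => q _; rewrite mulr1.
Qed.

Lemma sum_Delta1_antipode (F : H * H -> K) : bil F ->
  \sum_(p <- Delta 1) F (S p.1, S p.2) = \sum_(p <- Delta 1) F (p.2, p.1).
Proof.
move=> hF; have D1 := bilDl hF; have D2 := bilDr hF.
Delta1_to_epss1 (fun u : H * H => F (S u.1, S u.2)) (1 : H).
Delta1_to_epst2 (fun u : H * H => F (S (epss u.1), S u.2)) (1 : H).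
under eq_bigr => p _ do rewrite_weq (antipode_epss p.1).
under eq_bigr => p _ do rewrite_weq (antipode_epst p.2).
epst2_to_Delta1 (fun u : H * H => F (epst (epss u.1), epss u.2)).
under eq_bigr => q _ do rewrite mulr1.
epss1_to_Delta1 (fun u : H * H => F (epst u.1, epss u.2)).
under eq_bigr => q _ do rewrite mul1r epstE epssE bil_suml //.
under eq_bigr => q _ do under eq_bigr => a _ do rewrite bilZl // bil_sumr // big_distrr /=.
under eq_bigr => q _ do under eq_bigr => a _ do under eq_bigr => b _ do rewrite bilZr // mulrA.
rewrite exchange_big /=.
under eq_bigr => a _ do rewrite exchange_big /=.
under eq_bigr => a _ do under eq_bigr => b _ do
  rewrite -big_distrl /= (eps_weakM a.1 1 b.2).1 mulr1.
rewrite exchange_big /=.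
under eq_bigr => b _ do under eq_bigr => a _ do rewrite -(bilZl hF).
under eq_bigr => b _ do rewrite -(bil_suml hF) -epstE.
epst2_to_Delta1 (fun u : H * H => F (u.2, u.1)).
by under eq_bigr => q _ do rewrite mulr1.
Qed.

Lemma sum_Delta1_antipode_eq (F : H * H -> K) (G : H * H -> K) :
  bil F -> (forall p, G p = F (p.2, p.1)) ->
  \sum_(p <- Delta 1) G p = \sum_(p <- Delta 1) F (S p.1, S p.2).
Proof. by move=> hF hG; rewrite sum_Delta1_antipode //; apply: eq_bigr. Qed.

Lemma sum_Delta1_epssr_antipode (G : H * H -> K) (Gb : H * H -> K) x :
  bil G -> (forall q, Gb q = G (q.1, epss x * q.2)) ->
  \sum_(q <- Delta 1) Gb q = \sum_(a <- Delta x) \sum_(b <- Delta a.2) G (epss b.1, S a.1 * b.2).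
Proof.
move=> hG hGb; have D1 := bilDl hG; have D2 := bilDr hG.
rewrite (eq_bigr _ (fun q _ => hGb q)) /= -antipode_s.
under eq_bigr => q _ do rewrite big_distrl /= bil_sumr //.
rewrite exchange_big /=; apply: eq_bigr => a _.
under eq_bigr => q _ do rewrite -mulrA.
by Delta1_to_epss1 (fun u : H * H => G (u.1, S a.1 * u.2)) a.2.
Qed.

Lemma sum_DeltaS (F : H * H -> K) h : bil F ->
  \sum_(p <- Delta (S h)) F p = \sum_(p <- Delta h) F (S p.2, S p.1).
Proof.
move=> hF; have D1 := bilDl hF; have D2 := bilDr hF.
pose L := LForm (sum_Delta_kform hF).
rewrite -[LHS]/(L (S h)) (antipode_epssS h L) lf_sum /=.
under eq_bigr => t _ do (rewrite sum_DeltaM /=; [|bilin]).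
under eq_bigr => t _ do (rewrite (sum_Delta_epssl
  (F := fun u => \sum_(r <- Delta (S t.2)) F (u.1 * r.1, u.2 * r.2))) /=; [|bilin]).
under eq_bigr => t _ do (rewrite (sum_Delta1_epssr_antipode (x := t.1)
  (G := fun u => \sum_(r <- Delta (S t.2)) F (u.1 * r.1, u.2 * r.2))) /=; [|bilin|by []]).
under eq_bigr => t _ do under eq_bigr => a _ do under eq_bigr => b _ do under eq_bigr => r _ do
  rewrite -antipode_s big_distrl /= bil_suml //.
under eq_bigr => t _ do under eq_bigr => a _ do under eq_bigr => b _ do rewrite exchange_big /=.
under eq_bigr => t _ do under eq_bigr => a _ do coass_lr.
under eq_bigr => t _ do under eq_bigr => a _ do under eq_bigr => b _ do under eq_bigr => c _ do
  under eq_bigr => r _ do rewrite -!mulrA.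
under eq_bigr => t _ do under eq_bigr => a _ do under eq_bigr => b _ do
  fold_DeltaM (fun u : H * H => F (S b.1 * u.1, S a.1 * u.2)).
coass_lr.
under eq_bigr => t _ do coass_lr.
under eq_bigr => t _ do under eq_bigr => q _ do (rewrite sum_Delta_epstE /=; [|bilin]).
under eq_bigr => t _ do under eq_bigr => q _ do (rewrite sum_Delta_epstr /=; [|bilin]).
under eq_bigr => t _ do under eq_bigr => q _ do under eq_bigr => p _ do rewrite mulrA.
under eq_bigr => t _ do rewrite exchange_big /=.
under eq_bigr => t _ do under eq_bigr => p _ do
  fold_antipode_Sepst (fun v => F (v * p.1, S t.1 * p.2)).
under eq_bigr => t _ do (rewrite (sum_Delta1_antipode_eq
  (F := fun u => F (S t.2 * u.2, S t.1 * u.1))) /=; [|bilin|by []]).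
under eq_bigr => t _ do under eq_bigr => p _ do rewrite_weq (weq_sym (antipodeM p.2 t.2)).
under eq_bigr => t _ do under eq_bigr => p _ do rewrite_weq (weq_sym (antipodeM p.1 t.1)).
rewrite exchange_big /=.
by drop_Delta1M (fun u : H * H => F (S u.2, S u.1)).
Qed.

Lemma sum_mul_epss (g : H -> K) (G : H * H -> K) h :
  kform g -> (forall p, G p = g (p.1 * epss p.2)) ->
  \sum_(p <- Delta h) G p = g h.
Proof.
move=> hg hG; have DL : forall a x y, g (a *: x + y) = a * g x + g y := hg.
rewrite (eq_bigr _ (fun p _ => hG p)).
under eq_bigr => p _ do rewrite epssE big_distrr /= (kform_sum _ _ hg).
under eq_bigr => p _ do under eq_bigr => o _ do rewrite -scalerAr (kformZ _ _ hg).
rewrite (sum_DeltaM1_eq (F := fun u : H * H => eps u.2 * g u.1)) /=; [|bilin|by []].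
by rewrite sum_counitr.
Qed.

Section PartialModuleAlgebra.
Variables (A : algType K) (act : H -> A -> A).
Hypothesis HA : is_sym_partial_module_algebra Delta act.

Local Notation pi := (pi0 Delta act).
Local Notation smul := (smash_mul Delta act).

Lemma actDl a x y b : act (a *: x + y) b = a *: act x b + act y b.
Proof. by case: HA => ax _; apply: (ax b). Qed.

Lemma actDr h a x y : act h (a *: x + y) = a *: act h x + act h y.
Proof. by case: HA => _ [ax _]; apply: ax. Qed.

Lemma act_mul h (a b : A) : act h (a * b) = \sum_(p <- Delta h) act p.1 a * act p.2 b.
Proof. by case: HA => _ [_ [ax _]]. Qed.

Lemma act1 a : act 1 a = a.
Proof. by case: HA => _ [_ [_ [ax _]]]. Qed.

Lemma act_actl h k a : act h (act k a) = \sum_(p <- Delta h) act p.1 1 * act (p.2 * k) a.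
Proof. by case: HA => _ [_ [_ [_ [ax _]]]]. Qed.

Lemma act_actr h k a : act h (act k a) = \sum_(p <- Delta h) act (p.1 * k) a * act p.2 1.
Proof. by case: HA => _ [_ [_ [_ [_ ax]]]]. Qed.

Ltac linearity_hook ::= rewrite ?actDl ?actDr.

Lemma act0r h : act h 0 = 0.
Proof.
have := actDr h 1 0 0; rewrite !scale1r !addr0 => E.
by apply: (@addrI _ (act h 0)); rewrite -E !addr0.
Qed.

Lemma act_sumr h I (s : seq I) (G : I -> A) :
  act h (\sum_(i <- s) G i) = \sum_(i <- s) act h (G i).
Proof.
elim: s => [|i s IH]; first by rewrite !big_nil act0r.
by rewrite !big_cons -{1}[G i]scale1r actDr scale1r IH.
Qed.

Lemma act_epst_act x k a : weq (act (epst x) (act k a)) (act (epst x * k) a).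
Proof.
move=> g; rewrite act_actr lf_sum (sum_Delta_epstl
  (F := fun u => g (act (u.1 * k) a * act u.2 1))) /=; last by bilin.
transitivity (g (act 1 (act (epst x * k) a))); last by rewrite act1.
by rewrite act_actr lf_sum; apply: eq_bigr => q _; rewrite mulrA.
Qed.

Lemma act_epss_act x k a : weq (act (epss x) (act k a)) (act (epss x * k) a).
Proof.
move=> g; rewrite act_actl lf_sum (sum_Delta_epssr
  (F := fun u => g (act u.1 1 * act (u.2 * k) a))) /=; last by bilin.
transitivity (g (act 1 (act (epss x * k) a))); last by rewrite act1.
by rewrite act_actl lf_sum; apply: eq_bigr => q _; rewrite mulrA.
Qed.

Lemma act_act_epst1 h x : weq (act h (act (epst x) 1)) (act (h * epst x) 1).
Proof.
move=> g; rewrite -{2}(mulr1 (1 : A)) act_mul lf_sum.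
rewrite (sum_DeltaM_epst (F := fun u => g (act u.1 1 * act u.2 1))) /=; last by bilin.
by rewrite act_actr lf_sum.
Qed.

Lemma act_act_epss1 h x : weq (act h (act (epss x) 1)) (act (h * epss x) 1).
Proof.
move=> g; rewrite -{2}(mulr1 (1 : A)) act_mul lf_sum.
rewrite (sum_DeltaM_epss (F := fun u => g (act u.1 1 * act u.2 1))) /=; last by bilin.
by rewrite act_actl lf_sum.
Qed.

Lemma bf_act_1mul (f : bform A H) x b w :
  \sum_(q <- Delta x) f (act q.1 1 * act q.2 b) w = f (act x b) w.
Proof. by rewrite -bf_suml -act_mul mul1r. Qed.

Lemma bf_act_mull (f : bform A H) x a b Y w :
  \sum_(q <- Delta x) f (act q.1 a * act q.2 b * Y) w = f (act x (a * b) * Y) w.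
Proof. by rewrite act_mul big_distrl /= bf_suml. Qed.

Lemma bf_act_mullA (f : bform A H) x a b Y w :
  \sum_(q <- Delta x) f (act q.1 a * (act q.2 b * Y)) w = f (act x (a * b) * Y) w.
Proof. by rewrite -bf_act_mull; apply: eq_bigr => q _; rewrite mulrA. Qed.

Lemma bf_act_mulr (f : bform A H) x X a b w :
  \sum_(q <- Delta x) f (X * (act q.1 a * act q.2 b)) w = f (X * act x (a * b)) w.
Proof. by rewrite act_mul big_distrr /= bf_suml. Qed.

Lemma bf_act_mulrA (f : bform A H) x X a b w :
  \sum_(q <- Delta x) f (X * act q.1 a * act q.2 b) w = f (X * act x (a * b)) w.
Proof. by rewrite -bf_act_mulr; apply: eq_bigr => q _; rewrite mulrA. Qed.

Lemma bf_act_mul1l (f : bform A H) x X Y w :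
  \sum_(q <- Delta x) f (act q.1 X * act q.2 1 * Y) w = f (act x X * Y) w.
Proof. by rewrite bf_act_mull mulr1. Qed.

Lemma bf_act_act_1mul (f : bform A H) h x B w :
  \sum_(v <- Delta x) f (act h (act v.1 1 * act v.2 B)) w = f (act h (act x B)) w.
Proof. by rewrite -bf_suml -act_sumr -act_mul mul1r. Qed.

Lemma sum_smash_mul (F : A * H -> K) x y : \sum_(t <- smul x y) F t =
  \sum_(p <- x) \sum_(r <- y) \sum_(q <- Delta p.2) F (p.1 * act q.1 r.1, q.2 * r.2).
Proof.
rewrite /smash_mul big_flatten big_map; apply: eq_bigr => p _.
by rewrite big_allpairs_dep.
Qed.

Lemma sum_pi0 (F : A * H -> K) x : \sum_(t <- pi x) F t = \sum_(q <- Delta x) F (act q.1 1, q.2).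
Proof.
rewrite /pi0 /usmash sum_smash_mul big_cons big_nil addr0 big_cons big_nil addr0 /=.
by apply: eq_bigr => q _; rewrite mul1r mulr1.
Qed.

Lemma sum_pi0M (f : bform A H) x y : \sum_(t <- smul (pi x) (pi y)) f t.1 t.2 =
  \sum_(p <- Delta x) \sum_(r <- Delta y) f (act p.1 (act r.1 1)) (p.2 * r.2).
Proof.
rewrite sum_smash_mul sum_pi0.
under eq_bigr => a _ do rewrite sum_pi0 /= exchange_big /=.
rewrite (coassoc_rl
  (F := fun a q => \sum_(i <- Delta y) f (act a.1 1 * act q.1 (act i.1 1)) (q.2 * i.2)))
  //=; last by trilin.
apply: eq_bigr => a _; rewrite exchange_big /=; apply: eq_bigr => r _.
by rewrite bf_act_1mul.
Qed.

Lemma sum_smash_assoc (f : bform A H) x g b c m :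
 \sum_(p <- Delta x) \sum_(q <- Delta (p.2 * g)) f (act p.1 b * act q.1 c) (q.2 * m) =
 \sum_(p <- Delta x) \sum_(v <- Delta g) f (act p.1 (b * act v.1 c)) (p.2 * v.2 * m).
Proof.
symmetry.
under eq_bigr => p _ do under eq_bigr => v _ do
  rewrite act_mul bf_suml.
under eq_bigr => p _ do under eq_bigr => v _ do under eq_bigr => u _ do
  rewrite act_actl big_distrr bf_suml /=.
under eq_bigr => p _ do under eq_bigr => v _ do coass_rl.
under eq_bigr => p _ do under eq_bigr => v _ do under eq_bigr => u _ do rewrite bf_act_mullA mulr1.
under eq_bigr => p _ do rewrite exchange_big /=.
coass_lr.
apply: eq_bigr => p _; split_DeltaM.
apply: eq_bigr => u _; apply: eq_bigr => v _.
by [].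
Qed.

Lemma sum_pi0M3 (f : bform A H) x y w : \sum_(t <- smul (smul (pi x) (pi y)) (pi w)) f t.1 t.2 =
  \sum_(p <- Delta x) \sum_(r <- Delta y) \sum_(s <- Delta w)
     f (act p.1 (act r.1 (act s.1 1))) (p.2 * r.2 * s.2).
Proof.
rewrite sum_smash_mul.
under eq_bigr => t _ do rewrite sum_pi0 /=.
have hf : bilinear_form (fun a g => \sum_(s <- Delta w) \sum_(q <- Delta g)
          f (a * act q.1 (act s.1 1)) (q.2 * s.2)) by bilin.
apply: etrans (sum_pi0M (BForm hf) x y) _ => /=.
rewrite exchange_big /=.
under eq_bigr => r _ do rewrite exchange_big /=.
under eq_bigr => r _ do under eq_bigr => s _ do rewrite sum_smash_assoc.
under eq_bigr => r _ do rewrite exchange_big /=.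
under eq_bigr => r _ do under eq_bigr => p _ do rewrite exchange_big /=.
under eq_bigr => r _ do rewrite exchange_big /=.
coass_rl.
under eq_bigr => r _ do rewrite exchange_big /=.
under eq_bigr => r _ do under eq_bigr => p _ do rewrite exchange_big /=.
under eq_bigr => r _ do under eq_bigr => p _ do under eq_bigr => s _ do rewrite bf_act_act_1mul.
rewrite exchange_big /=; apply: eq_bigr => p _; apply: eq_bigr => r _; apply: eq_bigr => s _.
by [].
Qed.

Lemma sum_act_act_epst (f : bform A H) x y X :
  \sum_(i <- Delta x) \sum_(e <- Delta (epst y)) f (X * act i.1 (act e.1 1)) (i.2 * e.2) =
  \sum_(i <- Delta x) \sum_(e <- Delta (epst y)) f (X * act (i.1 * e.1) 1) (i.2 * e.2).
Proof.
under eq_bigr => i _ do (rewrite sum_Delta_epstl /=; [|bilin]).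
under [RHS]eq_bigr => i _ do (rewrite sum_Delta_epstl /=; [|bilin]).
under [RHS]eq_bigr => i _ do under eq_bigr => q _ do rewrite mulrA.
symmetry; drop_DeltaM1 (fun u : H * H => f (X * act (u.1 * epst y) 1) u.2); symmetry.
under eq_bigr => i _ do under eq_bigr => q _ do rewrite act_actl big_distrr /= bf_suml.
under eq_bigr => i _ do rewrite exchange_big /=.
coass_lr.
under eq_bigr => i _ do under eq_bigr => c _ do under eq_bigr => q _ do rewrite !mulrA.
under eq_bigr => i _ do
  drop_DeltaM1 (fun u : H * H => f (X * act i.1 1 * act (u.1 * epst y) 1) u.2).
rewrite -(coassoc_lr (G := fun i c => f (X * act c.1 1 * act (c.2 * epst y) 1) i.2))
  //=; last by trilin.
apply: eq_bigr => t _.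
rewrite (_ : \sum_(q <- Delta t.1) _ = f (X * act t.1 (act (epst y) 1)) t.2).
  by rewrite_weq (act_act_epst1 t.1 y).
by rewrite act_actl big_distrr /= bf_suml; apply: eq_bigr => q _; rewrite mulrA.
Qed.

Lemma pi0_PR2_lhsE (f : bform A H) h k :
  \sum_(p <- Delta k) \sum_(t <- smul (smul (pi h) (pi p.1)) (pi (S p.2))) f t.1 t.2 =
  \sum_(p <- Delta k) \sum_(a <- Delta h) \sum_(i <- Delta a.2) \sum_(e <- Delta (epst p.2))
    f (act (a.1 * p.1) 1 * act (i.1 * e.1) 1) (i.2 * e.2).
Proof.
under eq_bigr => p _ do rewrite sum_pi0M3.
under eq_bigr => p _ do under eq_bigr => a _ do under eq_bigr => r _ do under eq_bigr => s _ do
  rewrite [act r.1 _]act_actl act_sumr bf_suml.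
under eq_bigr => p _ do under eq_bigr => a _ do under eq_bigr => r _ do rewrite exchange_big /=.
under eq_bigr => p _ do under eq_bigr => a _ do coass_lr.
under eq_bigr => p _ do under eq_bigr => a _ do under eq_bigr => r _ do under eq_bigr => c _ do
  under eq_bigr => s _ do rewrite -mulrA.
under eq_bigr => p _ do under eq_bigr => a _ do under eq_bigr => r _ do
  fold_DeltaM (fun u : H * H => f (act a.1 (act r.1 1 * act u.1 1)) (a.2 * u.2)).
under eq_bigr => p _ do rewrite exchange_big /=.
coass_lr.
under eq_bigr => p _ do rewrite exchange_big /=.
under eq_bigr => p _ do under eq_bigr => a _ do (rewrite sum_Delta_epstE /=; [|bilin]).
under eq_bigr => p _ do under eq_bigr => a _ do under eq_bigr => e _ do
  rewrite act_mul bf_suml.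
under eq_bigr => p _ do under eq_bigr => a _ do under eq_bigr => e _ do under eq_bigr => i _ do
  rewrite [act i.1 (act p.1 1)]act_actr big_distrl /= bf_suml.
under eq_bigr => p _ do under eq_bigr => a _ do under eq_bigr => e _ do coass_lr.
under eq_bigr => p _ do under eq_bigr => a _ do under eq_bigr => e _ do under eq_bigr => i _ do
  rewrite bf_act_mulrA mul1r.
under eq_bigr => p _ do under eq_bigr => a _ do rewrite exchange_big /=.
under eq_bigr => p _ do coass_lr.
under eq_bigr => p _ do under eq_bigr => a _ do
  rewrite (sum_act_act_epst f a.2 p.2 (act (a.1 * p.1) 1)).
by [].
Qed.

Lemma pi0_PR2_rhsE (f : bform A H) h k :
  \sum_(p <- Delta k) \sum_(t <- smul (pi (h * p.1)) (pi (S p.2))) f t.1 t.2 =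
  \sum_(p <- Delta k) \sum_(a <- Delta h) \sum_(i <- Delta a.2) \sum_(e <- Delta (epst p.2))
    f (act (a.1 * p.1) 1 * act (i.1 * e.1) 1) (i.2 * e.2).
Proof.
under eq_bigr => p _ do rewrite sum_pi0M.
under eq_bigr => p _ do (rewrite sum_DeltaM /=; [|bilin]).
under eq_bigr => p _ do under eq_bigr => a _ do under eq_bigr => r _ do under eq_bigr => s _ do
  rewrite act_actl bf_suml.
under eq_bigr => p _ do under eq_bigr => a _ do under eq_bigr => r _ do under eq_bigr => s _ do
  (rewrite sum_DeltaM /=; [|bilin]).
under eq_bigr => p _ do under eq_bigr => a _ do under eq_bigr => r _ do rewrite exchange_big /=.
under eq_bigr => p _ do under eq_bigr => a _ do rewrite exchange_big /=.
under eq_bigr => p _ do coass_lr.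
under eq_bigr => p _ do under eq_bigr => a _ do under eq_bigr => u _ do under eq_bigr => r _ do
  rewrite exchange_big /=.
under eq_bigr => p _ do under eq_bigr => a _ do under eq_bigr => u _ do coass_lr.
under eq_bigr => p _ do under eq_bigr => a _ do under eq_bigr => u _ do under eq_bigr => r _ do
  under eq_bigr => v _ do under eq_bigr => s _ do rewrite -!mulrA.
under eq_bigr => p _ do under eq_bigr => a _ do under eq_bigr => u _ do under eq_bigr => r _ do
  fold_DeltaM (fun w : H * H => f (act (a.1 * r.1) 1 * act (u.1 * w.1) 1) (u.2 * w.2)).
under eq_bigr => p _ do under eq_bigr => a _ do rewrite exchange_big /=.
under eq_bigr => p _ do rewrite exchange_big /=.
coass_lr.
under eq_bigr => p _ do rewrite exchange_big /=.
under eq_bigr => p _ do under eq_bigr => a _ do rewrite exchange_big /=.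
by under eq_bigr => p _ do under eq_bigr => a _ do under eq_bigr => u _ do
  (rewrite sum_Delta_epstE /=; [|bilin]).
Qed.

Lemma pi0_PR2 (f : bform A H) h k :
  \sum_(p <- Delta k) \sum_(t <- smul (smul (pi h) (pi p.1)) (pi (S p.2))) f t.1 t.2 =
  \sum_(p <- Delta k) \sum_(t <- smul (pi (h * p.1)) (pi (S p.2))) f t.1 t.2.
Proof. by rewrite pi0_PR2_lhsE pi0_PR2_rhsE. Qed.

Lemma sum_Delta_antipode_mul (F : H -> H -> H -> K) (G : H * H -> H * H -> H * H -> K) h :
  trilinear_form F ->
  (forall w c y, G w c y = F (c.1 * y.1) c.2 (w.2 * y.2)) ->
  \sum_(p <- Delta h) \sum_(w <- Delta (S p.1)) \sum_(c <- Delta w.1) \sum_(y <- Delta p.2)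
    G w c y =
  \sum_(p <- Delta h) \sum_(q <- Delta p.2) \sum_(r <- Delta q.2)
    F (epss r.1) (S q.1) (S p.1 * r.2).
Proof.
move=> hF hG; have [D1 D2 D3] := trilinearD hF.
under eq_bigr => p _ do under eq_bigr => w _ do under eq_bigr => c _ do
  under eq_bigr => y _ do rewrite hG.
under eq_bigr => p _ do (rewrite sum_DeltaS /=; [|bilin]).
under eq_bigr => p _ do under eq_bigr => a _ do (rewrite sum_DeltaS /=; [|bilin]).
coass_lr.
under eq_bigr => p _ do coass_lr.
under eq_bigr => p _ do under eq_bigr => q _ do coass_rl.
by under eq_bigr => p _ do under eq_bigr => q _ do under eq_bigr => r _ do
  fold_antipode_s (fun v => F v (S q.1) (S p.1 * r.2)).
Qed.

Lemma pi0_PR5 (f : bform A H) h k :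
  \sum_(p <- Delta h) \sum_(t <- smul (smul (pi (S p.1)) (pi p.2)) (pi k)) f t.1 t.2 =
  \sum_(p <- Delta h) \sum_(t <- smul (pi (S p.1)) (pi (p.2 * k))) f t.1 t.2.
Proof.
under eq_bigr => p _ do rewrite sum_pi0M3.
under [RHS]eq_bigr => p _ do rewrite sum_pi0M.
under eq_bigr => p _ do under eq_bigr => w _ do under eq_bigr => y _ do under eq_bigr => s _ do
  rewrite [act w.1 _]act_actr bf_suml.
under eq_bigr => p _ do under eq_bigr => w _ do under eq_bigr => y _ do rewrite exchange_big /=.
under eq_bigr => p _ do under eq_bigr => w _ do rewrite exchange_big /=.
rewrite (sum_Delta_antipode_mul
  (F := fun u v t => \sum_(s <- Delta k) f (act u (act s.1 1) * act v 1) (t * s.2))) /=;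
  [|trilin|by []].
under [RHS]eq_bigr => p _ do under eq_bigr => w _ do (rewrite sum_DeltaM /=; [|bilin]).
under [RHS]eq_bigr => p _ do under eq_bigr => w _ do under eq_bigr => y _ do under eq_bigr => s _ do
  rewrite [act w.1 _]act_actr bf_suml.
under [RHS]eq_bigr => p _ do under eq_bigr => w _ do under eq_bigr => y _ do under eq_bigr => s _ do
  under eq_bigr => c _ do rewrite !mulrA.
under [RHS]eq_bigr => p _ do under eq_bigr => w _ do under eq_bigr => y _ do
  rewrite exchange_big /=.
under [RHS]eq_bigr => p _ do under eq_bigr => w _ do rewrite exchange_big /=.
rewrite (sum_Delta_antipode_mul
  (F := fun u v t => \sum_(s <- Delta k) f (act (u * s.1) 1 * act v 1) (t * s.2))) /=;
  [|trilin|by []].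
apply: eq_bigr => p _; apply: eq_bigr => q _; apply: eq_bigr => r _; apply: eq_bigr => s _.
by rewrite_weq (act_epss_act r.1 s.1 1).
Qed.

Lemma pi0_PR3_lhsE (f : bform A H) h k :
  \sum_(p <- Delta k) \sum_(t <- smul (smul (pi h) (pi (S p.1))) (pi p.2)) f t.1 t.2 =
  \sum_(p <- Delta k) \sum_(q <- Delta p.2) \sum_(r <- Delta q.2) \sum_(a <- Delta h)
  \sum_(u <- Delta a.1) f (act (u.1 * epss r.1) 1 * act (u.2 * S q.1) 1) (a.2 * (S p.1 * r.2)).
Proof.
under eq_bigr => p _ do rewrite sum_pi0M3.
under eq_bigr => p _ do under eq_bigr => a _ do under eq_bigr => w _ do under eq_bigr => y _ do
  rewrite [act w.1 _]act_actr act_sumr bf_suml.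
under eq_bigr => p _ do rewrite exchange_big /=.
under eq_bigr => p _ do under eq_bigr => w _ do under eq_bigr => a _ do rewrite exchange_big /=.
under eq_bigr => p _ do under eq_bigr => w _ do rewrite exchange_big /=.
under eq_bigr => p _ do under eq_bigr => w _ do under eq_bigr => c _ do rewrite exchange_big /=.
rewrite (sum_Delta_antipode_mul
  (F := fun u v t => \sum_(a <- Delta h) f (act a.1 (act u 1 * act v 1)) (a.2 * t))) /=;
  [|trilin|by move=> w c y; apply: eq_bigr => a _; rewrite mulrA].
under eq_bigr => p _ do under eq_bigr => q _ do under eq_bigr => r _ do under eq_bigr => a _ do
  rewrite act_mul bf_suml.
under eq_bigr => p _ do under eq_bigr => q _ do under eq_bigr => r _ do under eq_bigr => a _ do
  under eq_bigr => u _ do rewrite [act u.2 _]act_actl big_distrr /= bf_suml.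
under eq_bigr => p _ do under eq_bigr => q _ do under eq_bigr => r _ do under eq_bigr => a _ do
  under eq_bigr => u _ do under eq_bigr => d _ do rewrite mulrA.
under eq_bigr => p _ do under eq_bigr => q _ do under eq_bigr => r _ do
  under eq_bigr => a _ do coass_rl.
under eq_bigr => p _ do under eq_bigr => q _ do under eq_bigr => r _ do under eq_bigr => a _ do
  under eq_bigr => u _ do rewrite bf_act_mul1l.
under eq_bigr => p _ do under eq_bigr => q _ do under eq_bigr => r _ do under eq_bigr => a _ do
  under eq_bigr => u _ do rewrite_weq (act_act_epss1 u.1 r.1).
by [].
Qed.

Lemma pi0_PR3_rhsE (f : bform A H) h k :
  \sum_(p <- Delta k) \sum_(t <- smul (pi (h * S p.1)) (pi p.2)) f t.1 t.2 =
  \sum_(p <- Delta k) \sum_(q <- Delta p.2) \sum_(r <- Delta q.2) \sum_(a <- Delta h)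
  \sum_(u <- Delta a.1) f (act (u.1 * epss r.1) 1 * act (u.2 * S q.1) 1) (a.2 * (S p.1 * r.2)).
Proof.
under eq_bigr => p _ do rewrite sum_pi0M.
under eq_bigr => p _ do (rewrite sum_DeltaM /=; [|bilin]).
under eq_bigr => p _ do under eq_bigr => a _ do under eq_bigr => w _ do under eq_bigr => y _ do
  rewrite act_actr bf_suml.
under eq_bigr => p _ do under eq_bigr => a _ do under eq_bigr => w _ do under eq_bigr => y _ do
  (rewrite sum_DeltaM /=; [|bilin]).
under eq_bigr => p _ do under eq_bigr => a _ do under eq_bigr => w _ do under eq_bigr => y _ do
  rewrite exchange_big /=.
under eq_bigr => p _ do under eq_bigr => a _ do under eq_bigr => w _ do rewrite exchange_big /=.
under eq_bigr => p _ do rewrite exchange_big /=.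
under eq_bigr => p _ do under eq_bigr => w _ do rewrite exchange_big /=.
under eq_bigr => p _ do under eq_bigr => w _ do under eq_bigr => c _ do rewrite exchange_big /=.
rewrite (sum_Delta_antipode_mul (F := fun x v t => \sum_(a <- Delta h) \sum_(u <- Delta a.1)
    f (act (u.1 * x) 1 * act (u.2 * v) 1) (a.2 * t))) /=;
  [|trilin|by move=> w c y; apply: eq_bigr => a _; apply: eq_bigr => u _; rewrite !mulrA].
done.
Qed.

Lemma pi0_PR3 (f : bform A H) h k :
  \sum_(p <- Delta k) \sum_(t <- smul (smul (pi h) (pi (S p.1))) (pi p.2)) f t.1 t.2 =
  \sum_(p <- Delta k) \sum_(t <- smul (pi (h * S p.1)) (pi p.2)) f t.1 t.2.
Proof. by rewrite pi0_PR3_lhsE pi0_PR3_rhsE. Qed.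

Lemma sum_Delta_mul_antipode (F : H -> H -> H -> K) (G : H * H -> H * H -> K) h :
  trilinear_form F ->
  (forall x y, G x y = F x.1 (S y.2) (x.2 * S y.1)) ->
  \sum_(p <- Delta h) \sum_(x <- Delta p.1) \sum_(y <- Delta p.2) G x y =
  \sum_(p <- Delta h) \sum_(o <- Delta 1) F (o.1 * p.1) (S p.2) o.2.
Proof.
move=> hF hG; have [D1 D2 D3] := trilinearD hF.
under eq_bigr => p _ do under eq_bigr => x _ do under eq_bigr => y _ do rewrite hG.
coass_lr.
under eq_bigr => p _ do coass_rl.
under eq_bigr => p _ do under eq_bigr => q _ do fold_antipode_t (fun v => F p.1 (S q.2) v).
coass_rl.
by under eq_bigr => p _ do epst2_to_Delta1 (fun u : H * H => F u.1 (S p.2) u.2).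
Qed.

Lemma sum_Delta_epss_epst (F : H -> H -> H -> K) h : trilinear_form F ->
  \sum_(p <- Delta h) \sum_(o <- Delta 1) \sum_(d <- Delta (o.1 * p.1)) F d.1 (d.2 * S p.2) o.2 =
  \sum_(p <- Delta h) \sum_(q <- Delta 1) \sum_(r <- Delta 1)
     F (r.1 * p.1) (epss q.1 * epst r.2 * epst p.2) q.2.
Proof.
move=> hF; have [D1 D2 D3] := trilinearD hF.
under eq_bigr => p _ do under eq_bigr => o _ do (rewrite sum_DeltaM /=; [|bilin]).
under eq_bigr => p _ do under eq_bigr => o _ do rewrite exchange_big /=.
under eq_bigr => p _ do rewrite exchange_big /=.
coass_lr.
under eq_bigr => p _ do rewrite exchange_big /=.
under eq_bigr => p _ do under eq_bigr => o _ do rewrite exchange_big /=.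
under eq_bigr => p _ do under eq_bigr => o _ do under eq_bigr => e _ do under eq_bigr => q _ do
  rewrite -mulrA.
under eq_bigr => p _ do under eq_bigr => o _ do under eq_bigr => e _ do
  fold_antipode_t (fun v => F (e.1 * p.1) (e.2 * v) o.2).
under eq_bigr => p _ do unit_l.
under eq_bigr => p _ do
  Delta1_to_epss1 (fun u
    : H * H => \sum_(r <- Delta 1) F (r.1 * p.1) (u.1 * r.2 * epst p.2) u.2) (1 : H).
by under eq_bigr => p _ do under eq_bigr => q _ do
  Delta1_to_epst2 (fun u : H * H => F (u.1 * p.1) (epss q.1 * u.2 * epst p.2) q.2) (1 : H).
Qed.

Lemma pi0_PR4 (f : bform A H) h k :
  \sum_(p <- Delta h) \sum_(t <- smul (smul (pi p.1) (pi (S p.2))) (pi k)) f t.1 t.2 =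
  \sum_(p <- Delta h) \sum_(t <- smul (pi p.1) (pi (S p.2 * k))) f t.1 t.2.
Proof.
under eq_bigr => p _ do rewrite sum_pi0M3.
under [RHS]eq_bigr => p _ do rewrite sum_pi0M.
under eq_bigr => p _ do under eq_bigr => x _ do (rewrite sum_DeltaS /=; [|bilin]).
rewrite (sum_Delta_mul_antipode
  (F := fun u v t => \sum_(s <- Delta k) f (act u (act v (act s.1 1))) (t * s.2))) /=;
  [|trilin|by []].
under [RHS]eq_bigr => p _ do under eq_bigr => x _ do (rewrite sum_DeltaM /=; [|bilin]).
under [RHS]eq_bigr => p _ do under eq_bigr => x _ do (rewrite sum_DeltaS /=; [|bilin]).
under [RHS]eq_bigr => p _ do under eq_bigr => x _ do under eq_bigr => y _ do under eq_bigr => s _ do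
  rewrite !mulrA.
rewrite [RHS](sum_Delta_mul_antipode
  (F := fun u v t => \sum_(s <- Delta k) f (act u (act (v * s.1) 1)) (t * s.2))) /=;
  [|trilin|by []].
under eq_bigr => p _ do under eq_bigr => o _ do under eq_bigr => s _ do
  rewrite [act (o.1 * p.1) _]act_actl bf_suml.
under eq_bigr => p _ do under eq_bigr => o _ do rewrite exchange_big /=.
rewrite (sum_Delta_epss_epst
  (F := fun u v t => \sum_(s <- Delta k) f (act u 1 * act v (act s.1 1)) (t * s.2))) /=;
  [|trilin].
under [RHS]eq_bigr => p _ do under eq_bigr => o _ do under eq_bigr => s _ do
  rewrite [act (o.1 * p.1) _]act_actl bf_suml.
under [RHS]eq_bigr => p _ do under eq_bigr => o _ do rewrite exchange_big /=.
under [RHS]eq_bigr => p _ do under eq_bigr => o _ do under eq_bigr => d _ do under eq_bigr => s _ do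
  rewrite mulrA.
rewrite [RHS](sum_Delta_epss_epst
  (F := fun u v t => \sum_(s <- Delta k) f (act u 1 * act (v * s.1) 1) (t * s.2))) /=;
  [|trilin].
apply: eq_bigr => p _; apply: eq_bigr => q _; apply: eq_bigr => r _; apply: eq_bigr => s _.
rewrite -[epss q.1 * epst r.2 * epst p.2]mulrA.
rewrite_weq (weq_sym (act_epss_act q.1 (epst r.2 * epst p.2) (act s.1 1))).
rewrite_weq (weq_sym (act_epst_act r.2 (epst p.2) (act s.1 1))).
rewrite_weq (act_epst_act p.2 s.1 1).
rewrite_weq (act_epst_act r.2 (epst p.2 * s.1) 1).
rewrite_weq (act_epss_act q.1 (epst r.2 * (epst p.2 * s.1)) 1).
by rewrite !mulrA.
Qed.

Lemma pi0_PR6 (f : bform A H) h :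
  \sum_(t <- pi h) f t.1 t.2 =
  \sum_(p <- Delta2l Delta h) \sum_(t <- smul (smul (pi p.1.1) (pi (S p.1.2))) (pi p.2)) f t.1 t.2.
Proof.
rewrite sum_pi0 /Delta2l big_allpairs_dep /=.
under [RHS]eq_bigr => t _ do rewrite pi0_PR4.
under [RHS]eq_bigr => t _ do under eq_bigr => q _ do rewrite sum_pi0M.
symmetry; coass_lr.
under eq_bigr => t _ do rewrite exchange_big /=.
under eq_bigr => t _ do under eq_bigr => x _ do (rewrite sum_Delta_epssE /=; [|bilin]).
under eq_bigr => t _ do under eq_bigr => x _ do (rewrite sum_Delta_epssr /=; [|bilin]).
under eq_bigr => t _ do under eq_bigr => x _ do
  Delta1_to_epss1 (fun u : H * H => f (act x.1 (act u.1 1)) (x.2 * (u.2 * epss t.2))) (1 : H).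
under eq_bigr => t _ do under eq_bigr => x _ do under eq_bigr => p _ do
  rewrite_weq (act_act_epss1 x.1 p.1).
under eq_bigr => t _ do under eq_bigr => x _ do
  epss1_to_Delta1 (fun u : H * H => f (act (x.1 * u.1) 1) (x.2 * (u.2 * epss t.2))).
under eq_bigr => t _ do under eq_bigr => x _ do under eq_bigr => q _ do rewrite mul1r mulrA.
under eq_bigr => t _ do drop_DeltaM1 (fun u : H * H => f (act u.1 1) (u.2 * epss t.2)).
coass_lr.
by under eq_bigr => t _ do (rewrite (sum_mul_epss (g := fun v => f (act t.1 1) v)) /=; [|kf|by []]).
Qed.

End PartialModuleAlgebra.
End WeakHopf.

Theorem proposition3p6 (K : fieldType) (H : algType K)
    (eps : H -> K) (Delta : H -> seq (H * H)) (S : H -> H)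
    (A : algType K) (act : H -> A -> A) :
  is_weak_hopf eps Delta S ->
  is_sym_partial_module_algebra Delta act ->
  is_partial_rep_smash eps Delta S act (pi0 Delta act).
Proof.
move=> HW HA; split; [|split; [|split; [|split; [|split]]]].
- by move=> f.
- by move=> h k f hf _; rewrite !big_flatten !big_map; exact: (pi0_PR2 HW HA (BForm hf)).
- by move=> h k f hf _; rewrite !big_flatten !big_map; exact: (pi0_PR3 HW HA (BForm hf)).
- by move=> h k f hf _; rewrite !big_flatten !big_map; exact: (pi0_PR4 HW HA (BForm hf)).
- by move=> h k f hf _; rewrite !big_flatten !big_map; exact: (pi0_PR5 HW HA (BForm hf)).
- by move=> h f hf _; rewrite [RHS]big_flatten big_map; exact: (pi0_PR6 HW HA (BForm hf)).
Qed.
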